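(* Let $A$ be an infinite set and $I$ a set. The family of projections $(\pi_{i})_{i\in I}$, where $\pi_{i}:A^{I}\to A$, $\pi_{i}(f)=f(i)$, consists of elements of $\mathbf{F}(A,I)$ and freely generates $\mathbf{F}(A,I)$ with respect to the variety $V(\Omega(A))$.
   Context: For each $a\in A$ let $\hat{a}$ be a constant symbol, and for each $n\geq1$ and each $f:A^{n}\to A$ let $\hat{f}$ be an $n$-ary operation symbol. $\Omega(A)$ is the algebra with universe $A$ in which $\hat{a}$ is interpreted as $a$ and $\hat{f}$ as $f$; $V(\Omega(A))$ is the variety it generates. For a set $X$, $\Pi(X)$ is the lattice of partitions of $X$ (ordered by refinement); for $h:X\to Y$, $\Pi(h)$ is the partition of $X$ into nonempty fibers of $h$. For a filter $F$ on $\Pi(X)$, $\Omega(A)^{F}=\{h\in A^{X}:\Pi(h)\in F\}$, a subalgebra of $\Omega(A)^{X}$. For $i_{1},\dots,i_{n}\in I$, $\mathcal{P}_{i_{1},\dots,i_{n}}$ is the partition of $A^{I}$ in which $f,g$ lie in the same block iff $f(i_{k})=g(i_{k})$ for $k=1,\dots,n$. $\mathcal{P}(A,I)$ is the filter on $\Pi(A^{I})$ generated by all such partitions (i.e., all partitions of $A^{I}$ coarser than some $\mathcal{P}_{i_{1},\dots,i_{n}}$), and $\mathbf{F}(A,I)=\Omega(A)^{\mathcal{P}(A,I)}$. *)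

From Stdlib Require Import FunctionalExtensionality.
From Stdlib Require List.
From mathcomp Require Import all_boot.
Set Implicit Arguments. Unset Strict Implicit. Unset Printing Implicit Defensive.

(* Universal algebra for the signature of Omega(A):                        *)
(*   a constant symbol  \hat a  for each a : A, and                        *)
(*   an (n+1)-ary operation symbol \hat f for each f : A^(n+1) -> A        *)
(*   (arity n.+1 >= 1; A^m is represented as 'I_m -> A).                  *)

Record alg (A : Type) := Alg {
  carrier :> Type;
  cst : A -> carrier;
  op : forall n : nat, (('I_n.+1 -> A) -> A) -> ('I_n.+1 -> carrier) -> carrier
}.

Definition Omega (A : Type) : alg A :=
  @Alg A A (fun a => a) (fun n f x => f x).

Definition hom (A : Type) (B C : alg A) (h : B -> C) : Prop :=
  (forall a, h (@cst A B a) = @cst A C a) /\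
  (forall n (f : ('I_n.+1 -> A) -> A) (x : 'I_n.+1 -> B),
      h (@op A B n f x) = @op A C n f (fun k => h (x k))).

Definition subclosed (A : Type) (B : alg A) (P : B -> Prop) : Prop :=
  (forall a, P (@cst A B a)) /\
  (forall n (f : ('I_n.+1 -> A) -> A) (x : 'I_n.+1 -> B),
      (forall k, P (x k)) -> P (@op A B n f x)).

Definition subalg (A : Type) (B : alg A) (P : B -> Prop) (HP : subclosed P) : alg A :=
  @Alg A {x : B | P x}
    (fun a => exist P (@cst A B a) (proj1 HP a))
    (fun n f x => exist P (@op A B n f (fun k => sval (x k)))
                        (proj2 HP n f _ (fun k => proj2_sig (x k)))).

Definition prodalg (A : Type) (J : Type) (Bs : J -> alg A) : alg A :=
  @Alg A (forall j, Bs j)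
    (fun a j => @cst A (Bs j) a)
    (fun n f x j => @op A (Bs j) n f (fun k => x k j)).

Definition closedH (A : Type) (C : alg A -> Prop) : Prop :=
  forall (B B' : alg A) (h : B -> B'),
    hom h -> (forall y, exists x, h x = y) -> C B -> C B'.
Definition closedS (A : Type) (C : alg A -> Prop) : Prop :=
  forall (B : alg A) (P : B -> Prop) (HP : subclosed P), C B -> C (subalg HP).
Definition closedP (A : Type) (C : alg A -> Prop) : Prop :=
  forall (J : Type) (Bs : J -> alg A), (forall j, C (Bs j)) -> C (prodalg Bs).

Definition variety_generated (A : Type) (K : alg A) (B : alg A) : Prop :=
  forall C : alg A -> Prop,
    closedH C -> closedS C -> closedP C -> C K -> C B.

Definition generates (A : Type) (B : alg A) (I : Type) (x : I -> B) : Prop :=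
  forall P : B -> Prop, subclosed P -> (forall i, P (x i)) -> forall b, P b.

Definition freely_generates (A : Type) (V : alg A -> Prop) (B : alg A)
    (I : Type) (x : I -> B) : Prop :=
  V B /\ generates x /\
  forall C : alg A, V C -> forall g : I -> C,
    exists h : B -> C, hom h /\ forall i, h (x i) = g i.

(* Pi(h) in P(A,I)  iff  Pi(h) is coarser than some P_{i1..in}, i.e.       *)
(* there is a finite list l of indices such that any f, g : A^I agreeing   *)
(* on l lie in the same fiber of h.                                        *)

Definition in_PAI (A I : Type) (h : (I -> A) -> A) : Prop :=
  exists l : list I,
    forall f g : I -> A, (forall i, List.In i l -> f i = g i) -> h f = h g.

Definition OmegaPow (A I : Type) : alg A :=
  @prodalg A (I -> A) (fun _ => Omega A).

Lemma in_PAI_seq (A I : Type) (m : nat) (x : 'I_m -> (I -> A) -> A) :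
  (forall k, in_PAI (x k)) -> forall s : seq 'I_m,
  exists l : list I, forall k, k \in s ->
    forall f g : I -> A, (forall i, List.In i l -> f i = g i) -> x k f = x k g.
Proof.
move=> Hx; elim=> [|k0 s [l Hl]].
  by exists nil => k; rewrite in_nil.
have [l0 Hl0] := Hx k0.
exists (l0 ++ l)%list => k; rewrite in_cons => /orP [/eqP -> | Hk] f g Hfg.
  by apply: Hl0 => i Hi; apply: Hfg; apply: List.in_or_app; left.
by apply: Hl => // i Hi; apply: Hfg; apply: List.in_or_app; right.
Qed.

Lemma in_PAI_closed (A I : Type) : @subclosed A (OmegaPow A I) (@in_PAI A I).
Proof.
split.
  by move=> a; exists nil.
move=> n f x Hx.
have [l Hl] := in_PAI_seq Hx (enum 'I_n.+1).
exists l => g1 g2 Hg /=.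
congr (f _); apply: functional_extensionality => k.
by apply: Hl => //; rewrite mem_enum.
Qed.

Definition FAI (A I : Type) : alg A := subalg (@in_PAI_closed A I).

From Stdlib Require List.
From Stdlib Require Import Classical ClassicalEpsilon FunctionalExtensionality ProofIrrelevance.
From mathcomp Require Import all_boot.
Set Implicit Arguments. Unset Strict Implicit. Unset Printing Implicit Defensive.

(* Every member h of F(A,I) depends on finitely many coordinates, so it is a
   basic operation of Omega(A) applied to finitely many projections: F(A,I)
   consists exactly of the term functions in the projections, and two terms
   denote the same element of F(A,I) iff they define the same function on
   A^I, i.e. iff they form an identity of Omega(A).  Every identity of
   Omega(A) survives homomorphic images, subalgebras and products, hence holds
   throughout V(Omega(A)); so [eval g] is well defined on F(A,I) for any
   g : I -> C with C in V(Omega(A)), and it is the required homomorphism. *)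

Inductive term (A X : Type) : Type :=
| Var : X -> term A X
| Cst : A -> term A X
| Op : forall n, (('I_n.+1 -> A) -> A) -> ('I_n.+1 -> term A X) -> term A X.

Fixpoint eval (A X : Type) (B : alg A) (c : X -> B) (t : term A X) : B :=
  match t with
  | Var x => c x
  | Cst a => cst B a
  | Op n F ts => op F (fun k => eval c (ts k))
  end.

Definition sat_Omega_identities (A : Type) (C : alg A) : Prop :=
  forall (X : Type) (t1 t2 : term A X),
    (forall v : X -> A, eval (B := Omega A) v t1 = eval (B := Omega A) v t2) ->
    forall c : X -> C, eval c t1 = eval c t2.

Lemma sval_inj (T : Type) (P : T -> Prop) (u v : {x | P x}) : sval u = sval v -> u = v.
Proof. by apply: eq_sig_hprop => x p q; exact: proof_irrelevance. Qed.

Section Terms.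

Variables (A X : Type).

Lemma hom_eval (B C : alg A) (h : B -> C) (c : X -> B) (t : term A X) :
  hom h -> h (eval c t) = eval (fun x => h (c x)) t.
Proof.
move=> [h_cst h_op]; elim: t => [x|a|n F ts IH] /=; [by [] | exact: h_cst |].
by rewrite h_op; congr (op _ _); apply: functional_extensionality.
Qed.

Lemma eval_subalg (B : alg A) (P : B -> Prop) (HP : subclosed P)
    (c : X -> subalg HP) (t : term A X) :
  sval (eval c t) = eval (fun x => sval (c x)) t.
Proof.
elim: t => [x|a|n F ts IH] //=.
by congr (op _ _); apply: functional_extensionality.
Qed.

Lemma eval_prodalg (J : Type) (Bs : J -> alg A) (c : X -> prodalg Bs)
    (t : term A X) (j : J) :
  eval c t j = eval (fun x => c x j) t.
Proof.
elim: t => [x|a|n F ts IH] //=.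
by congr (op _ _); apply: functional_extensionality.
Qed.

Lemma subclosed_eval (B : alg A) (P : B -> Prop) (c : X -> B) (t : term A X) :
  subclosed P -> (forall x, P (c x)) -> P (eval c t).
Proof.
by move=> [P_cst P_op] Pc; elim: t => [x|a|n F ts IH] /=; [exact: Pc|exact: P_cst|exact: P_op].
Qed.

End Terms.

Section Identities.

Variable A : Type.

Lemma sat_Omega_identities_closedH : closedH (@sat_Omega_identities A).
Proof.
move=> B B' h hom_h h_onto satB X t1 t2 eq_t c'.
have [c h_c] : exists c : X -> B, forall x, h (c x) = c' x.
  by exists (fun x => sval (constructive_indefinite_description _ (h_onto (c' x)))) => x;
    case: constructive_indefinite_description.
have -> : c' = fun x => h (c x) by apply: functional_extensionality => x; rewrite h_c.
by rewrite -!hom_eval // (satB _ _ _ eq_t).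
Qed.

Lemma sat_Omega_identities_closedS : closedS (@sat_Omega_identities A).
Proof.
move=> B P HP satB X t1 t2 eq_t c.
by apply: sval_inj; rewrite !eval_subalg; exact: satB.
Qed.

Lemma sat_Omega_identities_closedP : closedP (@sat_Omega_identities A).
Proof.
move=> J Bs satBs X t1 t2 eq_t c.
by apply: functional_extensionality_dep => j; rewrite !eval_prodalg; exact: satBs.
Qed.

Lemma variety_generated_sat_Omega_identities (C : alg A) :
  variety_generated (Omega A) C -> sat_Omega_identities C.
Proof.
move=> C_V; apply: (C_V (@sat_Omega_identities A)) => //.
- exact: sat_Omega_identities_closedH.
- exact: sat_Omega_identities_closedS.
- exact: sat_Omega_identities_closedP.
Qed.

End Identities.

Lemma free_extension (A I : Type) (B C : alg A) (x : I -> B) :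
  (forall b, exists t, b = eval x t) ->
  (forall t1 t2, eval x t1 = eval x t2 ->
     forall v : I -> A, eval (B := Omega A) v t1 = eval (B := Omega A) v t2) ->
  sat_Omega_identities C ->
  forall g : I -> C, exists h : B -> C, hom h /\ forall i, h (x i) = g i.
Proof.
move=> x_onto x_rel satC g.
pose tm b := sval (constructive_indefinite_description _ (x_onto b)).
have tmK b : eval x (tm b) = b.
  by rewrite /tm; case: constructive_indefinite_description.
have h_eval t : eval g (tm (eval x t)) = eval g t by apply/satC/x_rel; rewrite tmK.
exists (fun b => eval g (tm b)); split=> [|i]; last exact: (h_eval (Var A i)).
split=> [a|n F y]; first exact: (h_eval (Cst I a)).
have -> : op F y = eval x (Op F (fun k => tm (y k))).
  by rewrite /=; congr (op _ _); apply: functional_extensionality => k; rewrite tmK.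
by rewrite h_eval.
Qed.

Section FAI.

Variables A I : Type.

Lemma variety_generated_FAI : variety_generated (Omega A) (FAI A I).
Proof. by move=> C _ C_S C_P C_Omega; apply/C_S/C_P. Qed.

Lemma In_tnth (l : seq I) (i : I) :
  List.In i l -> exists k, tnth (in_tuple l) k = i.
Proof.
elim: l => [|j l IH] //= [<- | /IH [k <-]]; first by exists ord0.
by exists (lift ord0 k); rewrite !(tnth_nth j) /= add0n.
Qed.

Lemma in_PAI_factor (a0 : A) (h : (I -> A) -> A) :
  in_PAI h ->
  exists n (idx : 'I_n -> I) (F : ('I_n -> A) -> A),
    forall f, h f = F (fun k => f (idx k)).
Proof.
move=> [l h_l]; exists (size l), (tnth (in_tuple l)).
pose ext v := epsilon (inhabits (fun _ : I => a0))
                      (fun f => forall k, f (tnth (in_tuple l) k) = v k).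
exists (fun v => h (ext v)) => f; apply: h_l => _ /In_tnth [k <-].
by symmetry; apply: (epsilon_spec _ (fun f' => forall k, f' _ = _)); exists f.
Qed.

(* The extra argument, a constant, only pads the arity to the form n.+1. *)
Lemma in_PAI_term (a0 : A) (h : (I -> A) -> A) :
  in_PAI h -> exists t : term A I, forall f, eval (B := Omega A) f t = h f.
Proof.
move=> /(in_PAI_factor a0) [n [idx [F h_F]]].
exists (Op (fun v : 'I_n.+1 -> A => F (fun k => v (lift ord_max k)))
           (fun k => if unlift ord_max k is Some j then Var A (idx j) else Cst I a0)).
by move=> f /=; rewrite h_F; congr F; apply: functional_extensionality => k; rewrite liftK.
Qed.

Variable proj_in_PAI : forall i : I, in_PAI (fun f : I -> A => f i).

Let proj (i : I) : FAI A I := exist (@in_PAI A I) (fun f => f i) (proj_in_PAI i).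

Lemma eval_proj (t : term A I) : sval (eval proj t) = fun f => eval (B := Omega A) f t.
Proof.
by apply: functional_extensionality => f; rewrite eval_subalg eval_prodalg.
Qed.

Lemma FAI_eval_proj (a0 : A) (b : FAI A I) : exists t, b = eval proj t.
Proof.
have [t t_b] := in_PAI_term a0 (proj2_sig b).
exists t; apply: sval_inj; rewrite eval_proj.
by apply: functional_extensionality => f; rewrite t_b.
Qed.

End FAI.

Theorem mainTheorem4 (A I : Type)
    (HA : ~ exists s : list A, forall a : A, List.In a s) :
  exists Hpi : forall i : I, in_PAI (fun f : I -> A => f i),
    @freely_generates A (variety_generated (Omega A)) (FAI A I) I
      (fun i : I => exist (@in_PAI A I) (fun f : I -> A => f i) (Hpi i)
         : FAI A I).
Proof.
have [a0 _] : exists a : A, True.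
  by apply: NNPP => noA; apply: HA; exists nil => a; case: noA; exists a.
have proj_in_PAI (i : I) : in_PAI (fun f : I -> A => f i).
  by exists [:: i] => f g; apply; left.
exists proj_in_PAI; split; first exact: variety_generated_FAI.
have proj_onto := FAI_eval_proj proj_in_PAI a0.
split=> [P P_closed P_proj b | C C_V].
  by have [t ->] := proj_onto b; exact: subclosed_eval.
apply: free_extension (variety_generated_sat_Omega_identities C_V) => // t1 t2 eq_t v.
by move: (congr1 (fun b => sval b v) eq_t); rewrite /= !eval_proj.
Qed.
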